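(* Let $\alpha=(\alpha_1,\dots,\alpha_k)\in\mathbb N^k$ with $k\ge1$ and $\alpha_k>0$. Then for every $\beta\in\mathbb P^k$, $$Z\tbinom{\alpha}{\beta}=M_\alpha=\sum_{0<i_1<\cdots<i_k}x_{i_1}^{\alpha_1}\cdots x_{i_k}^{\alpha_k}.$$ In particular, $Z\binom{\alpha}{\beta}$ is independent of $\beta$.
   Context: $\mathbb P$ denotes the positive and $\mathbb N$ the nonnegative integers. Let $X=\{x_i:i\in\mathbb P\}$ be commuting indeterminates. GSym. $\mathrm{GSym}\subseteq\mathbb Q[[X]]$ is the $\mathbb Q$-span of the series $\widehat M_{\binom{\gamma}{\mu}}=\sum_{0<i_1<\cdots<i_m}i_1^{\mu_1}\cdots i_m^{\mu_m}x_{i_1}^{\gamma_1}\cdots x_{i_m}^{\gamma_m}$, for $\gamma\in\mathbb N^m$ with $m=0$ or $\gamma_m>0$, and $\mu\in\mathbb N^m$. Regularization. For $\alpha\in\mathbb N^k$ and $\beta\in\mathbb P^k$, $\phi\binom{\alpha}{\beta}\in\mathrm{GSym}[t][z^{-1},z]]$ is obtained from $$\sum_{0<i_1<\cdots<i_k}x_{i_1}^{\alpha_1}\cdots x_{i_k}^{\alpha_k}e^{(i_1+t)\beta_1z}\cdots e^{(i_k+t)\beta_kz}$$ as follows. The coefficient of each $X$-monomial converges absolutely for $t\ge0$, $\mathrm{Re}(z)<0$. It is expanded as a Laurent series in $z$ with coefficients in $\mathbb Q[t]$, and powers of $z,t$ are collected. Renormalization. Let $P$ be the projection onto the polar part in $z$,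 $P(\sum_{n\ge m}a_nz^n)=\sum_{n<0}a_nz^n$. For $k\ge1$ define recursively $$\phi_-\tbinom{\alpha}{\beta}=-P\Big(\phi\tbinom{\alpha}{\beta}+\sum_{i=1}^{k-1}\phi\tbinom{\alpha_1..\alpha_i}{\beta_1..\beta_i}\phi_-\tbinom{\alpha_{i+1}..\alpha_k}{\beta_{i+1}..\beta_k}\Big),$$ $$\phi_+\tbinom{\alpha}{\beta}=(\mathrm{id}-P)\Big(\phi\tbinom{\alpha}{\beta}+\sum_{i=1}^{k-1}\phi\tbinom{\alpha_1..\alpha_i}{\beta_1..\beta_i}\phi_-\tbinom{\alpha_{i+1}..\alpha_k}{\beta_{i+1}..\beta_k}\Big).$$ Then $Z\binom{\alpha}{\beta}:=\phi_+\binom{\alpha}{\beta}\big|_{z=0}\in\mathrm{GSym}[t]$. *)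

From HB Require Import structures.
From mathcomp Require Import all_boot all_order all_algebra.
From mathcomp Require Import all_classical all_reals all_analysis.
Set Implicit Arguments.
Unset Strict Implicit.
Unset Printing Implicit Defensive.
Import Order.TTheory GRing.Theory Num.Theory.
Import numFieldNormedType.Exports.
Local Open Scope classical_set_scope.
Local Open Scope ring_scope.

(* Monomials in X = {x_1, x_2, ...}: a monomial is a seq of exponents  *)
(* m = [:: e_1; e_2; ...; e_n] standing for x_1^e_1 ... x_n^e_n.       *)
(* Two seqs denote the same monomial iff they agree up to trailing 0s. *)

Definition eqm (m1 m2 : seq nat) : bool :=
  all (fun i => nth 0%N m1 i == nth 0%N m2 i) (iota 0 (maxn (size m1) (size m2))).

(* the monomial x_{I_1}^{a_1} ... x_{I_k}^{a_k} of an index tuple I *)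
Definition tup_mono (alpha I : seq nat) : seq nat :=
  [seq (\sum_(j < size alpha) (nth 0%N I j == i) * nth 0%N alpha j)%N
  | i <- iota 1 (foldr maxn 0%N I)].

Definition valid (alpha : seq nat) (m : seq nat) (I : seq nat) : bool :=
  [&& size I == size alpha, sorted ltn (0%N :: I) & eqm (tup_mono alpha I) m].

(* Elements of Q[[X]][t]((z)) with bounded-below z-order:              *)
(* Laurent N c  stands for  sum_m sum_{j>=0} c m j z^(j-N) x^m,        *)
(* where c m j : {poly rat} is a polynomial in t.                      *)

Record laurent := Laurent { lval : nat ; lcoef : seq nat -> nat -> {poly rat} }.

Definition lzero : laurent := Laurent 0 (fun _ _ => 0).

Definition lshift (L : laurent) (N : nat) : seq nat -> nat -> {poly rat} :=
  (* the coefficients of L re-indexed with valuation bound N >= lval L *)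
  fun m j => if (N - lval L <= j)%N then lcoef L m (j - (N - lval L)) else 0.

Definition ladd (L1 L2 : laurent) : laurent :=
  let N := maxn (lval L1) (lval L2) in
  Laurent N (fun m j => lshift L1 N m j + lshift L2 N m j).

Definition lopp (L : laurent) : laurent := Laurent (lval L) (fun m j => - lcoef L m j).

Fixpoint decomp (m : seq nat) : seq (seq nat * seq nat) :=
  match m with
  | [::] => [:: ([::], [::])]
  | e :: m' => [seq (a :: p.1, (e - a)%N :: p.2) | a <- iota 0 e.+1, p <- decomp m']
  end.

Definition lmul (L1 L2 : laurent) : laurent :=
  Laurent (lval L1 + lval L2)
    (fun m j => \sum_(p <- decomp m) \sum_(j1 < j.+1) lcoef L1 p.1 j1 * lcoef L2 p.2 (j - j1)).

Definition lpolar (L : laurent) : laurent :=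
  Laurent (lval L) (fun m j => if (j < lval L)%N then lcoef L m j else 0).

Definition lreg (L : laurent) : laurent :=
  Laurent (lval L) (fun m j => if (lval L <= j)%N then lcoef L m j else 0).

Section Reg.
Variable R : realType.

(* coefficient of x^m in sum_{0<i_1<..<i_k} x_{i_1}^{a_1}..x_{i_k}^{a_k}
   e^{(i_1+t) b_1 z} ... e^{(i_k+t) b_k z}, for real t and z *)
Definition Fcoef (alpha beta m : seq nat) (t z : R) : \bar R :=
  (\esum_(I in [set I | valid alpha m I])
     (expR (z * \sum_(j < size alpha) ((nth 0%N I j)%:R + t) * (nth 0%N beta j)%:R))%:E)%E.

(* L is the Laurent expansion in z (coefficients in Q[t]) of every
   X-coefficient, valid for t >= 0 and z < 0 near 0 *)
Definition is_expansion (alpha beta : seq nat) (L : laurent) : Prop :=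
  forall (m : seq nat) (t : R), 0 <= t ->
    exists2 r : R, 0 < r & forall z : R, - r < z < 0 ->
      exists l : R,
        (series (fun j : nat => (map_poly ratr (lcoef L m j)).[t]
                               * z ^ (j%:Z - (lval L)%:Z)) @ \oo --> l)
        /\ Fcoef alpha beta m t z = l%:E.

Definition phi (alpha beta : seq nat) : laurent :=
  match pselect (exists L, is_expansion alpha beta L) with
  | left h => projT1 (cid h)
  | right _ => lzero
  end.

(* Renormalization: phi_- and phi_+ (recursion with fuel = length) *)
Fixpoint phim_f (n : nat) (alpha beta : seq nat) : laurent :=
  match n with
  | 0%N => lzero
  | n'.+1 =>
      lopp (lpolar (foldl ladd (phi alpha beta)
        [seq lmul (phi (take i alpha) (take i beta))
                  (phim_f n' (drop i alpha) (drop i beta))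
        | i <- iota 1 (size alpha).-1]))
  end.

Definition phim (alpha beta : seq nat) : laurent := phim_f (size alpha) alpha beta.

Definition phip (alpha beta : seq nat) : laurent :=
  lreg (foldl ladd (phi alpha beta)
        [seq lmul (phi (take i alpha) (take i beta)) (phim (drop i alpha) (drop i beta))
        | i <- iota 1 (size alpha).-1]).

(* Z(alpha; beta) = phi_+ |_{z=0}: coefficient of x^m is a polynomial in t *)
Definition Zcoef (alpha beta m : seq nat) : {poly rat} :=
  lcoef (phip alpha beta) m (lval (phip alpha beta)).

End Reg.

Fixpoint subs (s : seq nat) : seq (seq nat) :=
  match s with
  | [::] => [:: [::]]
  | x :: s' => [seq x :: u | u <- subs s'] ++ subs s'
  end.

(* Coefficient of x^m in M_alpha = sum_{0<i_1<..<i_k} x_{i_1}^{a_1}..x_{i_k}^{a_k}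
   (for alpha_k > 0: every such tuple has i_k <= size m, so the tuples range
   over the subsets of {1..size m}) *)
Definition Mcoef (alpha m : seq nat) : rat :=
  (count (valid alpha m) (subs (iota 1 (size m))))%:R.

From Pilot Require Import Defs.
From HB Require Import structures.
From mathcomp Require Import all_boot all_order all_algebra.
From mathcomp Require Import all_classical all_reals all_analysis.
From mathcomp Require Import zify ring lra.
Set Implicit Arguments.
Unset Strict Implicit.
Unset Printing Implicit Defensive.
Import Order.TTheory GRing.Theory Num.Theory.
Import numFieldNormedType.Exports.
Local Open Scope ring_scope.

(* Since alpha_k > 0, every index tuple contributing to the coefficient of
   x^m has its entries in {1, ..., size m}, so this coefficient of the
   regularized series is a finite sum of exponentials exp(z S_I(t)): an entire
   function of z whose value at z = 0 is the number of contributing tuples,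
   i.e. the coefficient of x^m in M_alpha.  By uniqueness of Laurent
   expansions, phi(alpha; beta) has no polar part and constant term M_alpha.
   The tails of alpha again end with a positive exponent, so by induction all
   counterterms phi_- vanish and Z(alpha; beta) is the constant term of
   phi(alpha; beta). *)

Definition lnull (K : laurent) : Prop := forall m j, lcoef K m j = 0.

Definition regular_at0 (K : laurent) (c : seq nat -> {poly rat}) : Prop :=
  (forall m j, (j < lval K)%N -> lcoef K m j = 0) /\
  (forall m, lcoef K m (lval K) = c m).

Lemma lmul_null_r K1 K2 : lnull K2 -> lnull (lmul K1 K2).
Proof.
move=> K2_0 m j /=; rewrite big1 // => p _.
by rewrite big1 // => i _; rewrite K2_0 mulr0.
Qed.

Lemma lshift_null K N m j : lnull K -> Defs.lshift K N m j = 0.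
Proof. by move=> K_0; rewrite /Defs.lshift; case: ifP. Qed.

Lemma regular_at0_ladd_null K K' c :
  regular_at0 K c -> lnull K' -> regular_at0 (ladd K K') c.
Proof.
move=> [K_pole K_const] K'_0; split=> [m j /= lt_j|m /=];
  rewrite (lshift_null _ _ _ K'_0) addr0 /Defs.lshift.
  case: ifP => // le_j; apply: K_pole.
  by move: lt_j le_j; rewrite /maxn; case: ifP => _; lia.
by rewrite leq_subr subKn ?leq_maxl.
Qed.

Lemma regular_at0_foldl_null (f : nat -> laurent) s K c :
  regular_at0 K c -> (forall i, i \in s -> lnull (f i)) ->
  regular_at0 (foldl ladd K (map f s)) c.
Proof.
elim: s K => [|i s IH] K K_reg //= f_0.
apply: IH => [|i' s_i']; last by apply: f_0; rewrite inE s_i' orbT.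
by apply: regular_at0_ladd_null => //; apply: f_0; rewrite mem_head.
Qed.

Lemma lpolar_regular_at0 K c : regular_at0 K c -> lnull (lopp (lpolar K)).
Proof. by move=> [K_pole _] m j /=; case: ifP => [/K_pole ->|_]; rewrite oppr0. Qed.

Definition admissible (s : seq nat) : bool := (0 < size s)%N && (0 < last 0%N s)%N.

Lemma admissible_drop s i :
  admissible s -> i \in iota 1 (size s).-1 -> admissible (drop i s).
Proof.
rewrite mem_iota => /andP[s_gt0 s_last] /andP[i_gt0 i_lt].
have drop_gt0 : (0 < size (drop i s))%N by rewrite size_drop; lia.
rewrite /admissible drop_gt0 /=.
move: s_last drop_gt0; rewrite -{1}(cat_take_drop i s) last_cat.
by case: (drop i s).
Qed.

Section Renormalization.
Variables (R : realType) (c : seq nat -> seq nat -> {poly rat}).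
Hypothesis phi_regular : forall s b, admissible s -> regular_at0 (phi R s b) (c s).

Lemma phim_f_null n s b : admissible s -> lnull (phim_f R n s b).
Proof.
elim: n s b => [|n IH] s b s_adm //=.
apply: (@lpolar_regular_at0 _ (c s)).
apply: regular_at0_foldl_null => [|i s_i]; first exact: phi_regular.
exact/lmul_null_r/IH/admissible_drop.
Qed.

Lemma Zcoef_regular s b m : admissible s -> Zcoef R s b m = c s m.
Proof.
move=> s_adm; rewrite /Zcoef /phip /= leqnn.
apply: (proj2 (regular_at0_foldl_null (phi_regular b s_adm) _) m) => i s_i.
exact/lmul_null_r/phim_f_null/admissible_drop.
Qed.

End Renormalization.

Lemma mem_subs_iota n lo (I : seq nat) :
  sorted ltn I -> all (fun x => lo <= x < lo + n)%N I -> I \in subs (iota lo n).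
Proof.
elim: n lo I => [|n IH] lo I; first by case: I => [|x I] //= _ /andP[]; lia.
case: I => [|x I] I_sorted I_range /=; rewrite mem_cat; first by rewrite orbC IH.
have x_lt : all (ltn x) I by apply: order_path_min I_sorted; exact: ltn_trans.
move: I_range => /= /andP[x_range I_range].
have y_range y : y \in I -> (x < y)%N && (lo <= y < lo + n.+1)%N.
  by move=> y_I; apply/andP; split; [exact: (allP x_lt) | exact: (allP I_range)].
have [->|x_neq] := eqVneq x lo.
  apply/orP; left; apply/map_f/IH; first exact: path_sorted I_sorted.
  by apply/allP => y /y_range; lia.
apply/orP; right; apply: IH => //=; apply/andP; split; first lia.
by apply/allP => y /y_range; lia.
Qed.

Lemma subs_iota_ge n lo u : u \in subs (iota lo n) -> all (fun x => lo <= x)%N u.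
Proof.
elim: n lo u => [|n IH] lo u /=; first by rewrite inE => /eqP ->.
rewrite mem_cat => /orP[/mapP[v /IH v_ge ->]|/IH u_ge] /=; last first.
  by apply/allP => y /(allP u_ge); lia.
by rewrite leqnn; apply/allP => y /(allP v_ge); lia.
Qed.

Lemma uniq_subs_iota n lo : uniq (subs (iota lo n)).
Proof.
elim: n lo => [|n IH] lo //=.
rewrite cat_uniq IH andbT map_inj_uniq ?IH => [/=|u v []//].
apply/hasPn => u /subs_iota_ge u_ge; apply/mapP => -[v _ u_def].
by move: u_ge; rewrite u_def /= ltnn.
Qed.

Lemma path_le_last (a : nat) I : path ltn a I -> forall x, x \in a :: I -> (x <= last a I)%N.
Proof.
elim: I a => [|y I IH] a /=; first by move=> _ x; rewrite inE => /eqP ->.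
move=> /andP[a_y y_path] x; rewrite inE => /orP[/eqP ->|x_I]; last exact: IH.
have := IH y y_path y (mem_head _ _); lia.
Qed.

Lemma leq_foldr_maxn x (I : seq nat) : x \in I -> (x <= foldr maxn 0 I)%N.
Proof. by elim: I => [|y I IH] //=; rewrite inE => /orP[/eqP ->|/IH]; lia. Qed.

Lemma eqm_nth m1 m2 i : eqm m1 m2 -> nth 0%N m1 i = nth 0%N m2 i.
Proof.
move=> /allP m12; have [lt_i|le_i] := ltnP i (maxn (size m1) (size m2)).
  by apply/eqP/m12; rewrite mem_iota.
by rewrite !nth_default //; move: le_i; rewrite geq_max => /andP[].
Qed.

Lemma mem_last_nonnil (T : eqType) (x0 : T) (s : seq T) : (0 < size s)%N -> last x0 s \in s.
Proof. by case: s => //= y s _; apply: mem_last. Qed.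

Lemma tup_mono_last s I :
  size I = size s -> (0 < size s)%N -> (0 < last 0%N I)%N ->
  (last 0%N s <= nth 0%N (tup_mono s I) (last 0%N I).-1)%N.
Proof.
move=> size_I s_gt0 I_last.
have lt_k : ((size s).-1 < size s)%N by lia.
have last_I : last 0%N I \in I by apply: mem_last_nonnil; rewrite size_I.
have nth_I : nth 0%N I (size s).-1 = last 0%N I by rewrite -size_I nth_last.
have := leq_foldr_maxn last_I => le_max.
rewrite /tup_mono (nth_map 0%N) ?size_iota; last by lia.
rewrite nth_iota; last by lia.
rewrite (bigD1 (Ordinal lt_k)) //= add1n prednK // nth_I eqxx mul1n nth_last.
exact: leq_addr.
Qed.

Lemma valid_mem_subs s m I : admissible s -> valid s m I -> I \in subs (iota 1 (size m)).
Proof.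
move=> /andP[s_gt0 s_last] /and3P[/eqP size_I /= I_path I_mono].
have last_I : last 0%N I \in I by apply: mem_last_nonnil; rewrite size_I.
have I_gt0 : all (ltn 0) I by apply: order_path_min I_path; exact: ltn_trans.
have I_le x : x \in I -> (x <= last 0%N I)%N.
  by move=> x_I; apply: (path_le_last I_path); rewrite inE x_I orbT.
have last_gt0 : (0 < last 0%N I)%N by move/allP: I_gt0; apply.
have last_le : (last 0%N I <= size m)%N.
  have : (0 < nth 0%N m (last 0%N I).-1)%N.
    by rewrite -(eqm_nth _ I_mono); apply: leq_trans (tup_mono_last size_I s_gt0 last_gt0).
  by case: (leqP (last 0%N I) (size m)) => // lt_m; rewrite nth_default //; lia.
apply: mem_subs_iota (path_sorted I_path) _; apply/allP => x x_I.
by move/allP: I_gt0 => /(_ x x_I) /=; have := I_le x x_I; lia.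
Qed.

Section LaurentUniqueness.
Local Open Scope classical_set_scope.
Variable R : realFieldType.

Lemma sum_expr_le2 (q : R) n : 0 <= q -> q <= 2^-1 -> \sum_(i < n) q ^+ i <= 2.
Proof.
move=> q_ge0 q_le; elim: n => [|n IH]; first by rewrite big_ord0; lra.
rewrite big_ord_recl expr0; under eq_bigr do rewrite exprS.
have sum_ge0 : 0 <= \sum_(i < n) q ^+ i by apply: sumr_ge0 => i _; exact: exprn_ge0.
rewrite -mulr_sumr; nra.
Qed.

Lemma le0_of_le_small (x E rho : R) :
  0 < rho -> 0 <= E -> (forall e, 0 < e < rho -> x <= E * e) -> x <= 0.
Proof.
move=> rho_gt0 E_ge0 x_le; apply/ler_addgt0Pr => eps eps_gt0; rewrite add0r.
set w := eps / (E + 1).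
have w_gt0 : 0 < w by rewrite divr_gt0 //; lra.
have eps_w : eps = w * (E + 1) by rewrite /w divfK //; lra.
set e := Num.min (rho / 2) w.
have e_gt0 : 0 < e by rewrite lt_min w_gt0 andbT; lra.
have e_lt : e < rho by rewrite gt_min; apply/orP; left; lra.
have e_le : e <= w by rewrite ge_min lexx orbT.
have := x_le e; rewrite e_gt0 e_lt => /(_ isT); nra.
Qed.

Lemma series_terms_bounded (u : nat -> R) :
  cvgn (series u) -> exists2 B, 0 <= B & forall n, `|u n| <= B.
Proof.
move=> /cvg_series_bounded [M [_ M_bound]]; exists (`|M| + 1) => [|n].
  by rewrite addr_ge0.
by apply: M_bound => //; have := ler_norm M; lra.
Qed.

Lemma laurent_tail_le (a : nat -> R) k (B z0 z h : R) :
  (forall j, (j < k)%N -> a j = 0) -> 0 <= B ->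
  (forall j, `|a j * z0 ^ (j%:Z - k%:Z)| <= B) ->
  z0 < 0 -> z0 / 2 < z < 0 ->
  series (fun j => a j * z ^ (j%:Z - k%:Z)) @ \oo --> h ->
  `|h - a k| <= 2 * B * (z / z0).
Proof.
move=> a_lt_k B_ge0 a_z0 z0_lt0 /andP[z_gt z_lt0] a_cvg.
set q := z / z0.
have z_q : z = q * z0 by rewrite /q divfK //; lra.
have q_ge0 : 0 <= q by nra.
have q_le : q <= 2^-1 by nra.
have termE j : (k <= j)%N ->
    a j * z ^ (j%:Z - k%:Z) = a j * z0 ^ (j%:Z - k%:Z) * q ^+ (j - k).
  by move=> le_kj; rewrite subzn // -!exprnP z_q exprMn; ring.
have dist_cvg : (fun n => `|series (fun j => a j * z ^ (j%:Z - k%:Z)) n - a k|) @ \oo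
    --> `|h - a k|.
  by apply: cvg_norm; apply: cvgB; [exact: a_cvg | exact: cvg_cst].
(* Past a_k, the partial sums are dominated by sum_i B q^(i+1) <= 2 B q. *)
apply: (@closed_cvg _ _ _ _ _ _ (@closed_le _ (2 * B * q)) _ _ dist_cvg).
exists k.+1 => // n /= le_n.
rewrite /series /= (@big_cat_nat _ _ _ k) //=; last by lia.
rewrite big1_seq ?add0r; last first.
  by move=> j; rewrite mem_index_iota => /andP[_ /andP[_ lt_j]]; rewrite a_lt_k // mul0r.
rewrite big_ltn // subrr expr0z mulr1 addrC addrK -{1}(add0n k.+1) big_addn.
apply: (le_trans (ler_norm_sum _ _ _)).
apply: (@le_trans _ _ (\sum_(0 <= i < n - k.+1) B * q ^+ i.+1)).
  apply: ler_sum => i _; rewrite termE; last by lia.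
  rewrite normrM (ger0_norm (exprn_ge0 _ q_ge0)).
  have -> : ((i + k.+1) - k = i.+1)%N by lia.
  by apply: ler_wpM2r; [exact: exprn_ge0 | exact: a_z0].
under eq_bigr do rewrite exprS mulrCA.
rewrite -!mulr_sumr big_mkord.
have := sum_expr_le2 (n - k.+1) q_ge0 q_le.
have : 0 <= \sum_(i < n - k.+1) q ^+ i by apply: sumr_ge0 => i _; exact: exprn_ge0.
have : 0 <= B * q := mulr_ge0 B_ge0 q_ge0.
nra.
Qed.

Lemma laurent_coef_eq (a : nat -> R) k (r A D : R) (H : R -> R) :
  0 < r -> 0 <= D -> (forall j, (j < k)%N -> a j = 0) ->
  (forall z, -r < z < 0 -> series (fun j => a j * z ^ (j%:Z - k%:Z)) @ \oo --> H z) ->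
  (forall z, -r < z < 0 -> `|H z - A| <= D * (- z)) ->
  a k = A.
Proof.
move=> r_gt0 D_ge0 a_lt_k a_cvg H_near.
set z0 := - (r / 2).
have z0_lt0 : z0 < 0 by rewrite /z0; lra.
have z0_in : -r < z0 < 0 by rewrite z0_lt0 andbT /z0; lra.
have [B B_ge0 a_z0] := series_terms_bounded (cvgP _ (a_cvg z0 z0_in)).
suff : `|a k - A| <= 0 by rewrite normr_le0 subr_eq0 => /eqP.
apply: (@le0_of_le_small _ (4 * B / r + D) (r / 4)); first by lra.
  by rewrite addr_ge0 // divr_ge0 //; lra.
move=> e /andP[e_gt0 e_lt].
have e_in : -r < - e < 0 by apply/andP; split; lra.
have e_near : z0 / 2 < - e < 0 by apply/andP; rewrite /z0; split; lra.
have := laurent_tail_le a_lt_k B_ge0 a_z0 z0_lt0 e_near (a_cvg _ e_in).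
have -> : 2 * B * (- e / z0) = 4 * B / r * e by rewrite /z0; field; lra.
have := H_near _ e_in; rewrite opprK.
have := ler_distD (H (- e)) (a k) A; rewrite (distrC (a k) (H (- e))).
lra.
Qed.

Lemma cvg_laurent_shift (a : nat -> R) N k (z g : R) : (k <= N)%N -> z != 0 ->
  series (fun j => a j * z ^ (j%:Z - N%:Z)) @ \oo --> g ->
  series (fun j => a j * z ^ (j%:Z - k%:Z)) @ \oo --> z ^+ (N - k) * g.
Proof.
move=> le_kN z_neq0 a_cvg.
have -> : (fun j => a j * z ^ (j%:Z - k%:Z)) =
          (fun j => z ^+ (N - k) * (a j * z ^ (j%:Z - N%:Z))).
  apply: funext => j; rewrite mulrCA exprnP -exprzDr ?unitfE //.
  by congr (_ * z ^ _); rewrite -subzn //; ring.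
have -> : series (fun j => z ^+ (N - k) * (a j * z ^ (j%:Z - N%:Z))) =
          (fun n => z ^+ (N - k) * series (fun j => a j * z ^ (j%:Z - N%:Z)) n).
  by apply: funext => n; rewrite /series /= mulr_sumr.
exact: cvgMl_tmp.
Qed.

Lemma norm_exprS_mul_le (z g A C : R) n : -1 < z < 0 -> 0 <= C ->
  `|g - A| <= C * (- z) -> `|z ^+ n.+1 * g| <= (`|A| + C) * (- z).
Proof.
move=> /andP[z_gt z_lt0] C_ge0 g_near.
rewrite normrM normrX ltr0_norm //.
have g_le : `|g| <= `|A| + C.
  have := ler_normD A (g - A); rewrite addrC subrK; nra.
have pow_le : (- z) ^+ n.+1 <= - z.
  by rewrite exprS; have := exprn_ile1 n (_ : 0 <= - z) (_ : - z <= 1); nra.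
have : 0 <= (- z) ^+ n.+1 by apply: exprn_ge0; lra.
have : 0 <= `|g| by [].
nra.
Qed.

Lemma laurent_expansion_at0 (a : nat -> R) N (r A C : R) (G : R -> R) :
  0 < r -> 0 <= C ->
  (forall z, -r < z < 0 -> series (fun j => a j * z ^ (j%:Z - N%:Z)) @ \oo --> G z) ->
  (forall z, -r < z < 0 -> `|G z - A| <= C * (- z)) ->
  (forall j, (j < N)%N -> a j = 0) /\ a N = A.
Proof.
move=> r_gt0 C_ge0 a_cvg G_near.
set r' := Num.min r 1.
have r'_gt0 : 0 < r' by rewrite lt_min r_gt0 ltr01.
have r'_le z : -r' < z < 0 -> (-r < z < 0) && (-1 < z < 0).
  by rewrite ltrNl lt_min => /andP[/andP[z_r z_1] ->]; rewrite andbT; apply/andP; split; lra.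
have shift_cvg k : (k <= N)%N -> forall z, -r' < z < 0 ->
    series (fun j => a j * z ^ (j%:Z - k%:Z)) @ \oo --> z ^+ (N - k) * G z.
  move=> le_kN z /r'_le /andP[z_r /andP[_ z_lt0]].
  by apply: cvg_laurent_shift => //; [rewrite lt_eqF | exact: a_cvg].
(* Below N, a_j is the leading coefficient of z^(N-j) G z, which is O(z). *)
have a_lt_N : forall j, (j < N)%N -> a j = 0.
  elim/ltn_ind => j IH lt_jN.
  apply: (@laurent_coef_eq a j r' 0 (`|A| + C) (fun z => z ^+ (N - j) * G z)) => //.
  - by rewrite addr_ge0.
  - by move=> i lt_ij; apply: IH => //; lia.
  - by apply: shift_cvg; lia.
  move=> z /r'_le /andP[z_r z_1]; rewrite subr0.
  have -> : (N - j = (N - j).-1.+1)%N by lia.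
  exact: norm_exprS_mul_le (G_near z z_r).
split => //.
apply: (@laurent_coef_eq a N r' A C (fun z => z ^+ (N - N) * G z)) => //.
  by apply: shift_cvg.
by move=> z /r'_le /andP[z_r _]; rewrite subnn expr0 mul1r; apply: G_near.
Qed.

End LaurentUniqueness.

Section Regularization.
Local Open Scope classical_set_scope.
Variable R : realType.

Definition valid_tuples (s m : seq nat) : seq (seq nat) :=
  seq.filter (valid s m) (subs (iota 1 (size m))).

Definition zweight (s b I : seq nat) (t : R) : R :=
  \sum_(j < size s) ((nth 0%N I j)%:R + t) * (nth 0%N b j)%:R.

Lemma mem_valid_tuples s m I : admissible s -> (I \in valid_tuples s m) = valid s m I.
Proof.
move=> s_adm; rewrite mem_filter andb_idr //; exact: valid_mem_subs.
Qed.

Lemma Fcoef_sum s b m t z : admissible s ->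
  Fcoef s b m t z = (\sum_(I <- valid_tuples s m) expR (z * zweight s b I t))%:E.
Proof.
move=> s_adm; rewrite /Fcoef; have -> : [set I | valid s m I] = [set` valid_tuples s m].
  by apply/seteqP; split => I /=; rewrite mem_valid_tuples.
rewrite esum_fset; [|exact: finite_seq|by move=> I _; rewrite lee_fin expR_ge0].
by rewrite -fsbig_seq ?filter_uniq ?uniq_subs_iota // sumEFin.
Qed.

Lemma zweight_ge0 s b I t : 0 <= t -> 0 <= zweight s b I t.
Proof. by move=> t_ge0; apply: sumr_ge0 => j _; rewrite mulr_ge0 ?addr_ge0. Qed.

Lemma sum_expR_near0 (l : seq (seq nat)) (f : seq nat -> R) (z : R) :
  z < 0 -> (forall I, 0 <= f I) ->
  `|\sum_(I <- l) expR (z * f I) - (size l)%:R| <= (\sum_(I <- l) f I) * (- z).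
Proof.
move=> z_lt0 f_ge0; elim: l => [|I l IH]; first by rewrite !big_nil subrr normr0 mul0r.
rewrite !big_cons /= -addn1 natrD.
have exp_le1 : expR (z * f I) <= 1 by rewrite expR_le1; have := f_ge0 I; nra.
have exp_ge := expR_ge1Dx (z * f I).
have -> : expR (z * f I) + \sum_(J <- l) expR (z * f J) - ((size l)%:R + 1) =
   (expR (z * f I) - 1) + (\sum_(J <- l) expR (z * f J) - (size l)%:R) by ring.
apply: (le_trans (ler_normD _ _)).
have : `|expR (z * f I) - 1| <= f I * (- z) by rewrite ler_norml; nra.
lra.
Qed.

Lemma poly_eq0_nonneg (p : {poly rat}) :
  (forall t : R, 0 <= t -> (map_poly ratr p).[t] = 0) -> p = 0.
Proof.
move=> p_0; apply/eqP; apply: contraT => p_neq0.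
set q := map_poly (ratr : rat -> R) p.
have q_neq0 : q != 0 by rewrite map_poly_eq0.
set rs := [seq (i%:R : R) | i <- iota 0 (size q)].
have rs_roots : all (root q) rs.
  by apply/allP => x /mapP[i _ ->]; rewrite /root p_0.
have rs_uniq : uniq rs.
  by rewrite map_inj_uniq ?iota_uniq // => i j /eqP; rewrite eqr_nat => /eqP.
by have := max_poly_roots q_neq0 rs_roots rs_uniq; rewrite size_map size_iota ltnn.
Qed.

Definition zweight_poly (s b I : seq nat) : {poly rat} :=
  \sum_(j < size s) ((nth 0%N I j)%:R%:P + 'X) * ((nth 0%N b j)%:R)%:P.

Lemma horner_zweight_poly s b I t : (map_poly ratr (zweight_poly s b I)).[t] = zweight s b I t.
Proof.
rewrite rmorph_sum horner_sum; apply: eq_bigr => j _.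
rewrite rmorphM rmorphD /= !map_polyC map_polyX /= !ratr_nat.
by rewrite hornerM hornerD hornerX !hornerC.
Qed.

Definition exp_expansion (s b : seq nat) : laurent :=
  Laurent 0 (fun m j => \sum_(I <- valid_tuples s m) (j`!%:R)^-1 *: zweight_poly s b I ^+ j).

Lemma exp_expansion_is_expansion s b : admissible s -> is_expansion R s b (exp_expansion s b).
Proof.
move=> s_adm m t t_ge0; exists 1 => // z /andP[_ z_lt0].
exists (\sum_(I <- valid_tuples s m) expR (z * zweight s b I t)); split; last first.
  exact: Fcoef_sum.
have -> : (fun j => (map_poly ratr (lcoef (exp_expansion s b) m j)).[t]
                    * z ^ (j%:Z - (lval (exp_expansion s b))%:Z))
        = (fun j => \sum_(I <- valid_tuples s m) exp_coeff (z * zweight s b I t) j).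
  apply: funext => j /=; rewrite rmorph_sum horner_sum mulr_suml; apply: eq_bigr => I _.
  rewrite -mul_polyC rmorphM /= map_polyC hornerM hornerC rmorphXn /= horner_exp.
  rewrite horner_zweight_poly exp_coeffE /= subr0 -exprnP fmorphV rmorph_nat exprMn; ring.
rewrite [X in X @ \oo --> _]/series /=.
under eq_fun do rewrite exchange_big /=.
apply: cvg_big => [|I _]; first exact: add_continuous.
exact: is_cvg_series_exp_coeff.
Qed.

Lemma expansion_regular s b L : admissible s -> is_expansion R s b L ->
  regular_at0 L (fun m => (Mcoef s m)%:P).
Proof.
move=> s_adm L_exp.
have coef_eval m (t : R) : 0 <= t ->
    (forall j, (j < lval L)%N -> (map_poly ratr (lcoef L m j)).[t] = 0) /\
    (map_poly ratr (lcoef L m (lval L))).[t] = (size (valid_tuples s m))%:R.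
  move=> t_ge0; have [r r_gt0 L_cvg] := L_exp m t t_ge0.
  apply: (@laurent_expansion_at0 R _ (lval L) r _
            (\sum_(I <- valid_tuples s m) zweight s b I t)
            (fun z => \sum_(I <- valid_tuples s m) expR (z * zweight s b I t))) => //.
  - by apply: sumr_ge0 => I _; apply: zweight_ge0.
  - move=> z z_in; have [l [l_cvg]] := L_cvg z z_in.
    by rewrite Fcoef_sum // => -[->].
  - move=> z /andP[_ z_lt0]; apply: sum_expR_near0 => // I; exact: zweight_ge0.
split=> [m j lt_j|m].
  by apply: poly_eq0_nonneg => t t_ge0; exact: (coef_eval m t t_ge0).1 j lt_j.
apply/eqP; rewrite -subr_eq0; apply/eqP/poly_eq0_nonneg => t t_ge0.
rewrite rmorphB /= hornerD hornerN (coef_eval m t t_ge0).2 map_polyC hornerC.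
rewrite /Mcoef /valid_tuples size_filter.
by apply/eqP; rewrite subr_eq0 eq_sym; apply/eqP; apply: ratr_nat.
Qed.

Lemma phi_regular s b : admissible s -> regular_at0 (phi R s b) (fun m => (Mcoef s m)%:P).
Proof.
move=> s_adm; rewrite /phi; case: pselect => [?|]; last first.
  by case; exists (exp_expansion s b); apply: exp_expansion_is_expansion.
by case: cid => L L_exp /=; exact: expansion_regular L_exp.
Qed.

End Regularization.

Theorem corollary4p5 (R : realType) (alpha beta : seq nat) :
  (0 < size alpha)%N -> (0 < last 0%N alpha)%N ->
  size beta = size alpha -> all (fun b => 0 < b)%N beta ->
  forall m : seq nat, Zcoef R alpha beta m = (Mcoef alpha m)%:P.
Proof.
move=> alpha_gt0 alpha_last _ _ m.
apply: (@Zcoef_regular R (fun s m => (Mcoef s m)%:P)); first exact: phi_regular.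
exact/andP.
Qed.
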